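(* Let $G=(V,E,s)$ be a flow graph with dominator tree $D$, let $(x,y)\in E$ with $x$ reachable from $s$, and let $G'$ be obtained from $G$ by deleting $(x,y)$, where $y$ is still reachable from $s$ in $G'$. If a vertex $v$ (reachable in both $G$ and $G'$) is affected by the deletion, i.e., $d'(v)\neq d(v)$, then $d(v)=d(y)$ and there is a path $P$ in $G$ from $y$ to $v$ such that $\mathit{depth}(d(v))<\mathit{depth}(w)$ for all vertices $w$ on $P$.
   Context: A flow graph $G=(V,E,s)$ is a directed graph with start vertex $s$; a vertex is reachable if there is a path from $s$ to it. For reachable vertices, $w$ dominates $v$ if every path from $s$ to $v$ contains $w$. The immediate dominator $d(v)$ of a reachable $v\neq s$ is the proper dominator of $v$ that is dominated by all other proper dominators of $v$. The dominator tree $D$ is the tree on the reachable vertices rooted at $s$ in which the parent of $v\neq s$ is $d(v)$; $\mathit{depth}(w)$ is the depth of $w$ in $D$ (the dominator tree of $G$, before the deletion). $d'(v)$ denotes the immediate dominator of $v$ in $G'$. *)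

From mathcomp Require Import all_boot.
Set Implicit Arguments. Unset Strict Implicit. Unset Printing Implicit Defensive.

Section FlowGraph.
Variable V : finType.

Definition reachable (e : rel V) (s v : V) : Prop := connect e s v.

Definition dominates (e : rel V) (s w v : V) : Prop :=
  reachable e s v /\
  forall p : seq V, path e s p -> last s p = v -> w \in s :: p.

Definition sdominates (e : rel V) (s w v : V) : Prop :=
  w <> v /\ dominates e s w v.

Definition is_idom (e : rel V) (s v d : V) : Prop :=
  v <> s /\ sdominates e s d v /\
  forall u, sdominates e s u v -> dominates e s u d.

Inductive dtree_depth (e : rel V) (s : V) : V -> nat -> Prop :=
| dtree_depth_root : dtree_depth e s s 0
| dtree_depth_step v d n :
    is_idom e s v d -> dtree_depth e s d n -> dtree_depth e s v n.+1.

Definition del_edge (e : rel V) (x y : V) : rel V :=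
  [rel a b | e a b && ((a, b) != (x, y))].

End FlowGraph.

(* Since dv strictly dominates v in G' too, dv dominates dv' in G'; as dv' <> dv,
   dv' cannot dominate v in G, so some s-v path of G avoids dv'.  That path must
   use the edge (x,y), and cutting it at x and after its last y yields G'-paths
   X from s to x and Q from y to v that both avoid dv'.  Every vertex of y :: Q is
   then dominated in G' by dv', hence by dv, while dv itself is not on y :: Q; and
   since x -> y :: Q avoids dv, dv dominates x in G, so dv dominates all of
   y :: Q in G as well.  A strict dominator u of y dominates x; in G' it is
   comparable with dv', and it cannot lie below dv' because X avoids dv', so u
   dominates dv' and thus v, whence u dominates dv: dv is the idom of y.
   Depths in the dominator tree are counted by the number of strict dominators. *)

From mathcomp Require Import all_boot boolp.
Set Implicit Arguments. Unset Strict Implicit. Unset Printing Implicit Defensive.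

Section Paths.
Variables (V : finType) (e : rel V).
Implicit Types (a w : V) (p q : seq V).

Lemma path_prefix_first a p w : path e a p -> w \in a :: p ->
  exists q, [/\ path e a q, last a q = w, w \notin belast a q,
     {subset a :: q <= a :: p} & {subset belast a q <= belast a p}].
Proof.
elim: p a => [|b p IH] a /=; first by rewrite inE => _ /eqP ->; exists [::]; split.
move=> /andP[eab pb]; case: (eqVneq w a) => [->|nwa] wp.
  by exists [::]; split => // z; rewrite inE => /eqP ->; apply: mem_head.
have [|q [pq lq nq sq bq]] := IH b pb.
  by move: wp; rewrite in_cons (negPf nwa).
exists (b :: q); split => /=; rewrite ?eab ?in_cons ?negb_or ?nwa //.
- by move=> z; rewrite in_cons => /predU1P[->|/sq zp]; rewrite in_cons ?eqxx ?zp ?orbT.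
- by move=> z; rewrite in_cons => /predU1P[->|/bq zp]; rewrite in_cons ?eqxx ?zp ?orbT.
Qed.

Lemma path_suffix_last a p w : path e a p -> w \in a :: p ->
  exists r, [/\ path e w r, last w r = last a p, w \notin r & {subset r <= p}].
Proof.
elim: p a => [|b p IH] a /=; first by rewrite inE => _ /eqP ->; exists [::]; split.
move=> /andP[eab pb] wp; case bp: (w \in b :: p).
  have [r [pr lr nr sr]] := IH b pb bp.
  by exists r; split => // z /sr zp; rewrite in_cons zp orbT.
have wa : w = a by move: wp; rewrite in_cons bp orbF => /eqP.
by subst w; exists (b :: p); split; rewrite /= ?eab ?bp.
Qed.

Variables x y : V.

Lemma path_del_edge a q : path (del_edge e x y) a q -> path e a q.
Proof. by apply: sub_path => u w /andP[]. Qed.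

Lemma path_del_edge_belast a q : path e a q -> x \notin belast a q ->
  path (del_edge e x y) a q.
Proof.
elim: q a => [|b q IH] a //= /andP[eab pq].
rewrite in_cons negb_or => /andP[xa xq].
by rewrite /del_edge /= eab (IH b pq xq) xpair_eqE (eq_sym a) (negPf xa).
Qed.

Lemma path_del_edge_notin a q : path e a q -> y \notin q ->
  path (del_edge e x y) a q.
Proof.
elim: q a => [|b q IH] a //= /andP[eab pq].
rewrite in_cons negb_or => /andP[yb yq].
by rewrite /del_edge /= eab (IH b pq yq) xpair_eqE (eq_sym b) (negPf yb) andbF.
Qed.

End Paths.

Section Dominators.
Variables (V : finType) (e : rel V) (s : V).
Implicit Types (a b c u w : V) (p : seq V).

Lemma dominates_mem_path a b p : dominates e s a b ->
  path e s p -> b \in s :: p -> a \in s :: p.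
Proof.
move=> [_ Dab] sp bp; have [q [sq lq _ qp _]] := path_prefix_first sp bp.
exact/qp/Dab.
Qed.

Lemma dominates_reachable a b : dominates e s a b -> reachable e s a.
Proof.
move=> Dab; have [/connectP[p sp lp] _] := Dab.
have ap : a \in s :: p by apply: dominates_mem_path Dab sp _; rewrite lp mem_last.
have [q [sq lq _ _ _]] := path_prefix_first sp ap.
by apply/connectP; exists q.
Qed.

Lemma dominates_refl a : reachable e s a -> dominates e s a a.
Proof. by split => // p _ <-; apply: mem_last. Qed.

Lemma dominates_trans a b c :
  dominates e s a b -> dominates e s b c -> dominates e s a c.
Proof.
move=> Dab [Rc Dbc]; split => // p sp lp.
exact: dominates_mem_path Dab sp (Dbc p sp lp).
Qed.

Lemma dominates_antisym a b :
  dominates e s a b -> dominates e s b a -> a = b.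
Proof.
move=> [/connectP[p sp lp] Dab] [_ Dba]; apply/eqP/negPn/negP => nab.
have [|q [sq lq nbq _ _]] := path_prefix_first sp (w := b).
  by rewrite lp mem_last.
have [r [sr lr _ _ rq]] := path_prefix_first sq (Dab q sq lq).
move: (Dba r sr lr); rewrite lastI mem_rcons in_cons lr eq_sym (negPf nab) /=.
by move/rq; rewrite (negPf nbq).
Qed.

Lemma dominates_path_avoiding a w p :
  reachable e s w -> path e w p -> a \notin p ->
  dominates e s a (last w p) -> dominates e s a w.
Proof.
move=> Rw wp ap [_ Da]; split => // q sq lq; apply/negPn/negP => aq.
have := Da (q ++ p); rewrite cat_path sq lq wp last_cat lq -cat_cons mem_cat.
by rewrite (negPf aq) (negPf ap) => /(_ isT erefl).
Qed.

Lemma dominates_total a b w : dominates e s a w -> dominates e s b w ->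
  dominates e s a b \/ dominates e s b a.
Proof.
move=> Daw Dbw; have [/connectP[p sp lp] _] := Daw.
have ap : a \in s :: p by apply: dominates_mem_path Daw sp _; rewrite lp mem_last.
have [r [ar lr nar _]] := path_suffix_last sp ap; rewrite -lp in lr.
have [|bar] := boolP (b \in a :: r); first rewrite in_cons => /orP[/eqP->|br].
- by left; apply/dominates_refl/(dominates_reachable Daw).
- have [rb [brb lrb _ rbr]] := path_suffix_last ar (@mem_behead _ (a :: r) _ br).
  left; apply: dominates_path_avoiding (dominates_reachable Dbw) brb _ _.
    by apply: contra nar => /rbr.
  by rewrite lrb lr.
- right; apply: dominates_path_avoiding (dominates_reachable Daw) ar _ _.
    by apply: contra bar; apply: (@mem_behead _ (a :: r)).
  by rewrite lr.
Qed.

Lemma not_dominates_path a w : reachable e s w -> ~ dominates e s a w ->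
  exists p, [/\ path e s p, last s p = w & a \notin s :: p].
Proof.
move=> Rw nDaw; apply: contrapT => noP; apply: nDaw; split => // p sp lp.
by apply/negPn/negP => ap; apply: noP; exists p.
Qed.

Lemma sdominates_edge_source x y u : e x y -> reachable e s x ->
  sdominates e s u y -> dominates e s u x.
Proof.
move=> exy Rx [nuy [_ Duy]]; split => // p sp lp.
have := Duy (rcons p y); rewrite rcons_path sp lp exy last_rcons -rcons_cons.
by rewrite mem_rcons in_cons => /(_ isT erefl) /orP[/eqP/nuy|].
Qed.

Definition sdoms w : {set V} := [set u | `[< sdominates e s u w >]].

Lemma sdomsP u w : reflect (sdominates e s u w) (u \in sdoms w).
Proof. by rewrite inE; apply: asboolP. Qed.

Lemma sdominates_start u : ~ sdominates e s u s.
Proof. by move=> [nus [_ Dus]]; move: (Dus [::] isT erefl); rewrite inE => /eqP. Qed.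

Lemma sdoms_start : sdoms s = set0.
Proof. by apply/setP => u; rewrite in_set0; apply/sdomsP/sdominates_start. Qed.

Lemma start_in_sdoms w : reachable e s w -> w != s -> s \in sdoms w.
Proof.
move=> Rw nws; apply/sdomsP; split; first by move=> sw; rewrite sw eqxx in nws.
by split => // p _ _; apply: mem_head.
Qed.

Lemma sdoms_subset a b : dominates e s a b -> sdoms a \subset sdoms b.
Proof.
move=> Dab; apply/subsetP => u /sdomsP[nua Dua]; apply/sdomsP; split.
  by move=> ub; apply: nua; rewrite ub in Dua *; apply: dominates_antisym.
exact: dominates_trans Dab.
Qed.

Lemma card_sdoms_lt a b : sdominates e s a b -> #|sdoms a| < #|sdoms b|.
Proof.
move=> Sab; apply/proper_card/properP; split; first exact: sdoms_subset Sab.2.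
by exists a; apply/sdomsP => // -[].
Qed.

Lemma idom_exists w : reachable e s w -> w != s ->
  exists2 d, is_idom e s w d & sdoms d = sdoms w :\ d.
Proof.
move=> Rw nws.
have [d dw dmax] := arg_maxnP (fun u => #|sdoms u|) (start_in_sdoms Rw nws).
have Sdw : sdominates e s d w by apply/sdomsP.
have Idw : is_idom e s w d.
  split; first by apply/eqP.
  split=> // u Suw; have [//|Ddu] := dominates_total Suw.2 Sdw.2.
  have [->|nud] := eqVneq u d; first exact: dominates_refl (dominates_reachable Ddu).
  have Sdu : sdominates e s d u by split => // du; rewrite du eqxx in nud.
  have uw : u \in sdoms w by apply/sdomsP.
  by move: (dmax u uw) => /(leq_trans (card_sdoms_lt Sdu)); rewrite ltnn.
exists d => //; apply/setP => u; rewrite in_setD1.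
have [->|nud] /= := eqVneq u d; first by apply/sdomsP => -[].
apply/sdomsP/sdomsP => [Sud|Suw].
  exact/sdomsP/(subsetP (sdoms_subset Sdw.2))/sdomsP.
by split; [move/eqP: nud | apply: Idw.2.2].
Qed.

Lemma dtree_depth_sdoms w : reachable e s w -> dtree_depth e s w #|sdoms w|.
Proof.
move Ek : #|sdoms w| => k; elim: k w Ek => [|k IH] w Ek Rw.
  have [->|nws] := eqVneq w s; first exact: dtree_depth_root.
  by move: Ek; rewrite (cardD1 s) start_in_sdoms.
have nws : w != s by apply: contra_eqN Ek => /eqP->; rewrite sdoms_start cards0.
have [d Idw Ed] := idom_exists Rw nws.
have dw : d \in sdoms w by apply/sdomsP; exact: Idw.2.1.
apply: dtree_depth_step Idw (IH _ _ (dominates_reachable Idw.2.1.2)).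
by move: Ek; rewrite (cardsD1 d) dw -Ed add1n => -[].
Qed.

End Dominators.

Section DeletedEdge.
Variables (V : finType) (e : rel V) (s x y : V).
Local Notation e' := (del_edge e x y).

Lemma reachable_del_edge w : reachable e' s w -> reachable e s w.
Proof. by move=> /connectP[p /path_del_edge sp ->]; apply/connectP; exists p. Qed.

Lemma dominates_del_edge a w :
  dominates e s a w -> reachable e' s w -> dominates e' s a w.
Proof. by move=> [_ Daw] Rw; split => // p /path_del_edge; apply: Daw. Qed.

Lemma dominates_del_edge_source a w :
  dominates e' s a w -> dominates e s a x -> dominates e s a w.
Proof.
move=> [Rw Daw] Dax; split=> [|p sp lp]; first exact: reachable_del_edge.
have [xp|nxp] := boolP (x \in belast s p).
  exact: dominates_mem_path Dax sp (mem_belast xp).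
exact: Daw p (path_del_edge_belast y sp nxp) lp.
Qed.

Variables v dv dv' : V.
Hypotheses (exy : e x y) (Rx : reachable e s x) (Ry' : reachable e' s y).
Hypotheses (Rv' : reachable e' s v) (Idv : is_idom e s v dv).
Hypotheses (Idv' : is_idom e' s v dv') (neq_idom : dv <> dv').

Lemma idom_dominates_del_idom : dominates e' s dv dv'.
Proof.
case: Idv => _ [[ndv Ddv] _]; apply: Idv'.2.2.
by split; last exact: dominates_del_edge.
Qed.

Lemma paths_avoiding_del_idom : exists X Q, [/\ path e' s X, last s X = x,
  path e' y Q, last y Q = v & dv' \notin (s :: X) ++ y :: Q].
Proof.
have nDv : ~ dominates e s dv' v.
  move=> Dd'v; apply: neq_idom; apply: dominates_antisym idom_dominates_del_idom _.
  apply: dominates_del_edge.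
    by apply: Idv.2.2; split => //; case: Idv' => _ [[]].
  exact: dominates_reachable idom_dominates_del_idom.
have [P [sP lP nP]] := not_dominates_path (reachable_del_edge Rv') nDv.
have nP' : ~~ path e' s P by apply/negP => /(Idv'.2.1.2.2 P)/(_ lP); apply/negP.
have yP : y \in s :: P.
  rewrite in_cons; apply/orP; right.
  by apply: contraR nP' => /(path_del_edge_notin x sP).
have xP : x \in belast s P by apply: contraR nP' => /(path_del_edge_belast y sP).
have [Q [yQ lQ nyQ QP]] := path_suffix_last sP yP.
have [X [sX lX nxX XP _]] := path_prefix_first sP (mem_belast xP).
exists X, Q; split; rewrite ?lQ //.
- exact: path_del_edge_belast sX nxX.
- exact: path_del_edge_notin yQ nyQ.
apply: contra nP; rewrite mem_cat in_cons => /or3P[/XP //|/eqP-> //|/QP Pd'].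
by rewrite in_cons Pd' orbT.
Qed.

Variables X Q : seq V.
Hypotheses (sX : path e' s X) (lX : last s X = x).
Hypotheses (yQ : path e' y Q) (lQ : last y Q = v).
Hypothesis avoid_del_idom : dv' \notin (s :: X) ++ y :: Q.

Lemma del_idom_dominates_path w : w \in y :: Q -> dominates e' s dv' w.
Proof.
move=> wQ; have [r [wr lr nwr rQ]] := path_suffix_last yQ wQ.
apply: dominates_path_avoiding (connect_trans Ry' (path_connect yQ wQ)) wr _ _.
  by apply: contra avoid_del_idom => /rQ d'Q; rewrite mem_cat !in_cons d'Q !orbT.
by rewrite lr lQ; exact: Idv'.2.1.2.
Qed.

Lemma idom_notin_path : dv \notin y :: Q.
Proof.
apply/negP => /del_idom_dominates_path Dd'd; apply: neq_idom.
exact: dominates_antisym idom_dominates_del_idom Dd'd.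
Qed.

Lemma idom_sdominates_path w : w \in y :: Q -> sdominates e s dv w.
Proof.
move=> wQ; split; first by move=> dw; move: idom_notin_path; rewrite dw wQ.
apply: dominates_del_edge_source.
  exact: dominates_trans idom_dominates_del_idom (del_idom_dominates_path wQ).
apply: dominates_path_avoiding Rx _ idom_notin_path _.
  by rewrite /= exy (path_del_edge yQ).
by rewrite /= lQ; exact: Idv.2.1.2.
Qed.

Lemma idom_edge_target : is_idom e s y dv.
Proof.
have Sdy := idom_sdominates_path (mem_head y Q).
split; first by move=> ys; rewrite ys in Sdy; apply: sdominates_start Sdy.
split => // u Suy; have Dux := sdominates_edge_source exy Rx Suy.
have [Dud'|Dd'u] := dominates_total (dominates_del_edge Suy.2 Ry')
                                    (del_idom_dominates_path (mem_head y Q)).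
  have Duv := dominates_del_edge_source (dominates_trans Dud' Idv'.2.1.2) Dux.
  apply: Idv.2.2; split => // uv; apply: Idv'.2.1.1.
  by rewrite uv in Dud'; apply: dominates_antisym Idv'.2.1.2 Dud'.
have uX : u \in s :: X.
  by apply: dominates_mem_path Dux (path_del_edge sX) _; rewrite -lX mem_last.
by move: avoid_del_idom; rewrite mem_cat (dominates_mem_path Dd'u sX uX).
Qed.

End DeletedEdge.

Theorem lemma4 (V : finType) (e : rel V) (s x y v : V) :
  e x y ->
  reachable e s x ->
  reachable (del_edge e x y) s y ->
  reachable e s v ->
  reachable (del_edge e x y) s v ->
  forall dv dv' : V,
    is_idom e s v dv ->
    is_idom (del_edge e x y) s v dv' ->
    dv <> dv' ->
    (exists dy, is_idom e s y dy /\ dv = dy) /\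
    (exists p : seq V,
        path e y p /\ last y p = v /\
        exists n, dtree_depth e s dv n /\
          forall w, w \in y :: p -> exists m, dtree_depth e s w m /\ n < m).
Proof.
move=> exy Rx Ry' _ Rv' dv dv' Idv Idv' neq_idom.
have [X [Q [sX lX yQ lQ avoid]]] := paths_avoiding_del_idom Rv' Idv Idv' neq_idom.
have Sdv := idom_sdominates_path exy Rx Ry' Rv' Idv Idv' neq_idom yQ lQ avoid.
split.
  exists dv; split => //.
  exact (idom_edge_target exy Rx Ry' Rv' Idv Idv' neq_idom sX lX yQ lQ avoid).
exists Q; split; first exact: path_del_edge yQ.
split => //; exists #|sdoms e s dv|; split.
  exact/dtree_depth_sdoms/dominates_reachable/Idv.2.1.2.
move=> w wQ; exists #|sdoms e s w|; split; last exact: card_sdoms_lt (Sdv w wQ).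
exact/dtree_depth_sdoms/(Sdv w wQ).2.1.
Qed.
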